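(* Let $d\ge3$ be an integer, $p_1,\dots,p_d\in(0,1)$, $q_j=1-p_j$, and $P=\prod_{j=1}^d p_jq_j^{-1}$. Then there exist sequences $\varepsilon_n\to0$ and $\delta_n\to0$ such that for all sufficiently large $n$, $$\sum_{k=0}^n\binom nk^dP^k\le\left(\frac{P^{1/d}+1}{\sqrt{2\pi P^{1/d}}}+\varepsilon_n\right)^{d-1}n^{-\frac{d-1}{2}}\left(1+P^{1/d}\right)^{dn},$$ $$\sum_{k=0}^n\binom nk^dP^k\ge\left(\frac{P^{1/d}+1}{\sqrt{2\pi P^{1/d}}}\exp\!\left(-\frac{(P^{1/d}+1)^2}{2P^{1/d}}\right)+\delta_n\right)^{d}n^{-\frac{d-1}{2}}\left(1+P^{1/d}\right)^{dn}.$$ *)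

From Stdlib Require Import Reals.
Open Scope R_scope.

Definition Pprod (d : nat) (p : nat -> R) : R :=
  prod_f_R0 (fun j => p j / (1 - p j)) (Nat.pred d).

Definition binom_pow_sum (d n : nat) (P : R) : R :=
  sum_f_R0 (fun k => (Binomial.C n k) ^ d * P ^ k) n.

Definition root_d (d : nat) (P : R) : R := Rpower P (1 / INR d).

From Coquelicot Require Import Coquelicot.
From Stdlib Require Import Reals Lra Lia ZArith.
Open Scope R_scope.

(* With [r = P^(1/d)] and [p = r / (1 + r)], [C(n,k) r^k = (1 + r)^n b_k] where [b_k] is the
   binomial(n, p) probability of [k], so the sum is [(1 + r)^(d n) sum_k b_k^d].
   Upper bound: [sum_k b_k^d <= (max_k b_k)^(d-1)], and by Stirling's formula
   [sqrt n max_k b_k -> 1 / sqrt (2 pi p (1-p)) = (r + 1) / sqrt (2 pi r)].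
   Lower bound: each of the [sqrt n / 2] terms just above the mode is at least
   [b_(m + sqrt n / 2) ~ sqrt (2 / (pi n)) exp (- 1 / (4 p (1-p)))], which beats the required
   constant with room to spare, so [delta_n = 0] works.  Stirling's formula is used with explicit
   error bounds, obtained from Taylor bounds on [ln (1 + 1/i)] and Wallis' integrals. *)

Lemma exp_le_exp (x y : R) : x <= y -> exp x <= exp y.
Proof. intros [Hlt | ->]; [now apply Rlt_le, exp_increasing | apply Rle_refl]. Qed.

Lemma ln_le_sub_1 (x : R) : 0 < x -> ln x <= x - 1.
Proof. intros Hx. pose proof (exp_ineq1_le (ln x)) as H. rewrite exp_ln in H; lra. Qed.

Lemma one_sub_inv_le_ln (x : R) : 0 < x -> 1 - / x <= ln x.
Proof.
  intros Hx. pose proof (ln_le_sub_1 (/ x) (Rinv_0_lt_compat _ Hx)) as H.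
  rewrite ln_Rinv in H; lra.
Qed.

Lemma Rinv_eq_of_mul_eq_1 (n x : R) : n * x = 1 -> x = / n.
Proof.
  intros Hnx. assert (Hn : n <> 0) by (intros ->; lra).
  apply (Rmult_eq_reg_l n); [rewrite Rinv_r |]; assumption.
Qed.

Lemma Rinv_le_div_of_mul_le (a n x k : R) : 0 < a -> 0 < n -> n * x = 1 -> a * n <= k ->
  / k <= x / a.
Proof.
  intros Ha Hn Hnx Hk. rewrite (Rinv_eq_of_mul_eq_1 n x Hnx).
  replace (/ n / a) with (/ (a * n)) by (field; lra).
  apply Rinv_le_contravar; [nra | exact Hk].
Qed.

Lemma ex_derive_continuity_pt (f : R -> R) (x : R) : ex_derive f x -> continuity_pt f x.
Proof.
  intros H. apply continuity_pt_filterlim.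
  now apply (@ex_derive_continuous R_AbsRing R_NormedModule).
Qed.

Lemma le_of_derive_nonneg (f df : R -> R) (y : R) : 0 <= y ->
  (forall x, 0 <= x <= y -> is_derive f x (df x)) ->
  (forall x, 0 <= x <= y -> 0 <= df x) -> f 0 <= f y.
Proof.
  intros Hy Hd Hpos.
  assert (Hmin : Rmin 0 y = 0) by (apply Rmin_left; lra).
  assert (Hmax : Rmax 0 y = y) by (apply Rmax_right; lra).
  destruct (MVT_gen f 0 y df) as [c [Hc Heq]]; rewrite ?Hmin, ?Hmax in *.
  - intros x Hx. apply Hd; lra.
  - intros x Hx. apply ex_derive_continuity_pt. eexists. apply Hd; lra.
  - assert (0 <= df c) by (apply Hpos; lra). nra.
Qed.

Lemma ln_1p_le (y : R) : 0 <= y -> ln (1 + y) <= y - y ^ 2 / 2 + y ^ 3 / 3.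
Proof.
  intros Hy.
  set (f x := x - x ^ 2 / 2 + x ^ 3 / 3 - ln (1 + x)).
  enough (H : f 0 <= f y) by (unfold f in H; rewrite Rplus_0_r, ln_1 in H; lra).
  apply (le_of_derive_nonneg f (fun x => x ^ 3 / (1 + x))); [exact Hy | |].
  - intros x Hx. unfold f. auto_derive; [lra | field; lra].
  - intros x Hx. apply Rdiv_le_0_compat; [apply pow_le|]; lra.
Qed.

Lemma ln_1p_ge (y : R) : 0 <= y -> y - y ^ 2 / 2 + y ^ 3 / 3 - y ^ 4 / 4 <= ln (1 + y).
Proof.
  intros Hy.
  set (f x := ln (1 + x) - (x - x ^ 2 / 2 + x ^ 3 / 3 - x ^ 4 / 4)).
  enough (H : f 0 <= f y) by (unfold f in H; rewrite Rplus_0_r, ln_1 in H; lra).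
  apply (le_of_derive_nonneg f (fun x => x ^ 4 / (1 + x))); [exact Hy | |].
  - intros x Hx. unfold f. auto_derive; [lra | field; lra].
  - intros x Hx. apply Rdiv_le_0_compat; [apply pow_le|]; lra.
Qed.

(** * Stirling's formula with explicit error bounds *)

Definition stirling_ratio (n : nat) : R :=
  INR (fact n) / (sqrt (2 * PI * INR n) * (INR n / exp 1) ^ n).

Definition stirling_defect (i : nat) : R := (INR i + / 2) * ln (1 + / INR i) - 1.

Lemma stirling_defect_bound (i : nat) : (1 <= i)%nat ->
  Rabs (stirling_defect i) <= / 2 * (/ INR i - / INR (S i)).
Proof.
  intros Hi. unfold stirling_defect. rewrite S_INR.
  assert (Hi1 : 1 <= INR i) by (apply (le_INR 1); lia).
  set (y := / INR i).
  assert (Hy0 : 0 < y) by (apply Rinv_0_lt_compat; lra).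
  assert (Hy1 : y <= 1) by (rewrite <- Rinv_1; apply Rinv_le_contravar; lra).
  replace (INR i) with (/ y) by (unfold y; field; lra).
  replace (/ 2 * (y - / (/ y + 1))) with (y ^ 2 * / (2 * (1 + y))) by (field; lra).
  assert (Hlo : / 4 <= / (2 * (1 + y))) by (apply Rinv_le_contravar; lra).
  assert (Hhi : / 12 + y / 6 <= / (2 * (1 + y))).
  { replace (/ 12 + y / 6) with (/ (2 * (1 + y)) * ((1 + 2 * y) * (1 + y) / 6)) by (field; lra).
    rewrite <- (Rmult_1_r (/ (2 * (1 + y)))) at 2.
    apply Rmult_le_compat_l; [apply Rlt_le, Rinv_0_lt_compat; lra | nra]. }
  pose proof (ln_1p_le y (Rlt_le _ _ Hy0)) as Hup.
  pose proof (ln_1p_ge y (Rlt_le _ _ Hy0)) as Hdown.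
  apply Rmult_le_compat_l with (r := / y + / 2) in Hup, Hdown;
    [| pose proof (Rinv_0_lt_compat _ Hy0); lra ..].
  replace ((/ y + / 2) * (y - y ^ 2 / 2 + y ^ 3 / 3)) with (1 + y ^ 2 / 12 + y ^ 3 / 6) in Hup
    by (field; lra).
  replace ((/ y + / 2) * (y - y ^ 2 / 2 + y ^ 3 / 3 - y ^ 4 / 4))
    with (1 + y ^ 2 / 12 - y ^ 3 / 12 - y ^ 4 / 8) in Hdown by (field; lra).
  apply Rabs_le; split; nra.
Qed.

Lemma stirling_ratio_pos (n : nat) : (1 <= n)%nat -> 0 < stirling_ratio n.
Proof.
  intros Hn. assert (1 <= INR n) by (apply (le_INR 1); lia). pose proof PI_RGT_0.
  apply Rdiv_lt_0_compat; [apply lt_0_INR, lt_O_fact |].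
  apply Rmult_lt_0_compat; [apply sqrt_lt_R0; nra |].
  apply pow_lt, Rdiv_lt_0_compat; [lra | apply exp_pos].
Qed.

Lemma stirling_ratio_succ (i : nat) : (1 <= i)%nat ->
  stirling_ratio (S i) = stirling_ratio i * exp (- stirling_defect i).
Proof.
  intros Hi. assert (Hi1 : 1 <= INR i) by (apply (le_INR 1); lia). pose proof PI_RGT_0.
  set (z := 1 + / INR i).
  assert (Hz : 1 < z) by (pose proof (Rinv_0_lt_compat (INR i)); unfold z; lra).
  assert (Hexp : exp (- stirling_defect i) = exp 1 / (z ^ i * sqrt z)).
  { unfold stirling_defect. fold z.
    rewrite <- (Rpower_sqrt z), <- (Rpower_pow i z) by lra. unfold Rpower.
    replace (- ((INR i + / 2) * ln z - 1)) with (1 - INR i * ln z - / 2 * ln z) by ring.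
    unfold Rminus. rewrite !exp_plus, !exp_Ropp. field.
    split; apply Rgt_not_eq, exp_pos. }
  assert (HSi : INR (S i) = INR i * z) by (unfold z; rewrite S_INR; field; lra).
  assert (Hsqrt : sqrt (2 * PI * INR (S i)) = sqrt (2 * PI * INR i) * sqrt z).
  { rewrite HSi, <- sqrt_mult by nra. f_equal. ring. }
  unfold stirling_ratio. rewrite Hexp, Hsqrt, fact_simpl, mult_INR, HSi.
  replace (INR i * z / exp 1) with (INR i / exp 1 * z) by (field; apply Rgt_not_eq, exp_pos).
  rewrite Rpow_mult_distr. simpl pow.
  assert (0 < sqrt z) by (apply sqrt_lt_R0; lra).
  assert (0 < sqrt (2 * PI * INR i)) by (apply sqrt_lt_R0; nra).
  assert (0 < exp 1) by apply exp_pos.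
  assert (0 < (INR i / exp 1) ^ i) by (apply pow_lt, Rdiv_lt_0_compat; lra).
  assert (0 < z ^ i) by (apply pow_lt; lra).
  field. repeat split; lra.
Qed.

Lemma stirling_ratio_shift (m k : nat) : (1 <= m)%nat -> exists s,
  Rabs s <= / 2 * (/ INR m - / INR (m + k)) /\
  stirling_ratio (m + k) = stirling_ratio m * exp s.
Proof.
  intros Hm. induction k as [|k [s [Hs Hst]]].
  - exists 0. rewrite Nat.add_0_r, Rabs_R0, exp_0, Rmult_1_r. split; [lra | reflexivity].
  - exists (s - stirling_defect (m + k)).
    pose proof (stirling_defect_bound (m + k) ltac:(lia)) as Hg.
    replace (m + S k)%nat with (S (m + k)) by lia.
    split.
    + eapply Rle_trans; [apply Rabs_triang |]. rewrite Rabs_Ropp. lra.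
    + rewrite stirling_ratio_succ, Hst by lia. unfold Rminus. rewrite exp_plus. ring.
Qed.

Definition wallis_integral (n : nat) : R := RInt (fun x => sin x ^ n) 0 (PI / 2).

Lemma ex_RInt_sin_pow (n : nat) : ex_RInt (fun x => sin x ^ n) 0 (PI / 2).
Proof.
  apply (@ex_RInt_continuous R_CompleteNormedModule). intros z _.
  apply (@ex_derive_continuous R_AbsRing R_NormedModule). auto_derive. exact I.
Qed.

Lemma wallis_integral_0 : wallis_integral 0 = PI / 2.
Proof.
  unfold wallis_integral. simpl. rewrite RInt_const.
  unfold scal; simpl. unfold mult; simpl. ring.
Qed.

Lemma wallis_integral_1 : wallis_integral 1 = 1.
Proof.
  unfold wallis_integral. apply is_RInt_unique.
  replace 1 with (minus (- cos (PI / 2)) (- cos 0))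
    by (rewrite cos_PI2, cos_0; unfold minus, plus, opp; simpl; ring).
  apply (is_RInt_derive (fun x => - cos x)).
  - intros x _. auto_derive; [exact I | ring].
  - intros x _. apply (@ex_derive_continuous R_AbsRing R_NormedModule). auto_derive. exact I.
Qed.

(* Integration by parts against the primitive [- cos x * sin x ^ (n + 1)], which vanishes
   at both ends. *)
Lemma wallis_integral_rec (n : nat) :
  INR (S (S n)) * wallis_integral (S (S n)) = INR (S n) * wallis_integral n.
Proof.
  set (df x := INR (S (S n)) * sin x ^ (S (S n)) - INR (S n) * sin x ^ n).
  assert (Hparts : is_RInt df 0 (PI / 2) 0).
  { replace 0 with (minus (- cos (PI / 2) * sin (PI / 2) ^ (S n)) (- cos 0 * sin 0 ^ (S n))) at 2
      by (rewrite cos_PI2, sin_0; unfold minus, plus, opp; simpl; ring).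
    apply (is_RInt_derive (fun x => - cos x * sin x ^ (S n))).
    - intros x _. unfold df. auto_derive; [exact I |].
      change (match n with 0%nat => 1 | S _ => INR n + 1 end) with (INR (S n)).
      rewrite !S_INR. pose proof (sin2_cos2 x) as Hpyth. unfold Rsqr in Hpyth.
      simpl pow. apply Rminus_diag_uniq.
      transitivity ((INR n + 1) * sin x ^ n * (1 - sin x * sin x - cos x * cos x)); [ring |].
      replace (cos x * cos x) with (1 - sin x * sin x) by lra. ring.
    - intros x _. apply (@ex_derive_continuous R_AbsRing R_NormedModule).
      unfold df. auto_derive. exact I. }
  assert (Hlin : is_RInt df 0 (PI / 2)
     (INR (S (S n)) * wallis_integral (S (S n)) - INR (S n) * wallis_integral n)).
  { apply (@is_RInt_minus R_NormedModule);
      apply (@is_RInt_scal R_NormedModule), (@RInt_correct R_CompleteNormedModule),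
        ex_RInt_sin_pow. }
  pose proof (is_RInt_unique _ _ _ _ Hparts). pose proof (is_RInt_unique _ _ _ _ Hlin). lra.
Qed.

Lemma wallis_integral_decr (n : nat) : wallis_integral (S n) <= wallis_integral n.
Proof.
  pose proof PI_RGT_0. pose proof PI2_Rlt_PI.
  apply RInt_le; [lra | apply ex_RInt_sin_pow .. |].
  intros x Hx. assert (0 < sin x) by (apply sin_gt_0; lra).
  pose proof (SIN_bound x). pose proof (pow_le (sin x) n). simpl. nra.
Qed.

Definition wallis_coef (m : nat) : R := INR (fact (2 * m)) / (INR (fact m) ^ 2 * 4 ^ m).

Lemma wallis_coef_pos (m : nat) : 0 < wallis_coef m.
Proof.
  apply Rdiv_lt_0_compat; [apply lt_0_INR, lt_O_fact |].
  apply Rmult_lt_0_compat; apply pow_lt; [apply lt_0_INR, lt_O_fact | lra].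
Qed.

Lemma wallis_coef_succ (m : nat) :
  wallis_coef (S m) = wallis_coef m * (2 * INR m + 1) / (2 * INR m + 2).
Proof.
  unfold wallis_coef. replace (2 * S m)%nat with (S (S (2 * m))) by lia.
  rewrite !fact_simpl, !mult_INR, !S_INR, mult_INR. simpl pow. simpl INR.
  assert (0 < INR (fact m)) by (apply lt_0_INR, lt_O_fact).
  assert (0 < INR (fact (2 * m))) by (apply lt_0_INR, lt_O_fact).
  pose proof (pos_INR m). assert (0 < 4 ^ m) by (apply pow_lt; lra).
  field. repeat split; lra.
Qed.

Lemma wallis_integral_even_odd (m : nat) :
  wallis_integral (2 * m) = PI / 2 * wallis_coef m /\
  wallis_integral (S (2 * m)) = / ((2 * INR m + 1) * wallis_coef m).
Proof.
  induction m as [|m [IHeven IHodd]].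
  - unfold wallis_coef. simpl. rewrite wallis_integral_0, wallis_integral_1. split; field.
  - pose proof (wallis_coef_pos m). pose proof (pos_INR m).
    pose proof (wallis_integral_rec (2 * m)) as Reven.
    pose proof (wallis_integral_rec (S (2 * m))) as Rodd.
    replace (2 * S m)%nat with (S (S (2 * m))) by lia.
    assert (H2m : INR (2 * m) = 2 * INR m) by (rewrite mult_INR; simpl; ring).
    rewrite !S_INR, H2m in Reven. rewrite !S_INR, H2m in Rodd.
    rewrite wallis_coef_succ, S_INR.
    split.
    + apply (Rmult_eq_reg_l (2 * INR m + 1 + 1)); [rewrite Reven, IHeven; field | ]; lra.
    + apply (Rmult_eq_reg_l (2 * INR m + 1 + 1 + 1)); [rewrite Rodd, IHodd; field | ]; lra.
Qed.

(* Wallis' product formula, with explicit error: [W (2m+1) <= W (2m) <= W (2m-1)]. *)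
Lemma wallis_bounds (m : nat) : (1 <= m)%nat ->
  2 * INR m / (2 * INR m + 1) <= PI * INR m * wallis_coef m ^ 2 <= 1.
Proof.
  intros Hm. pose proof PI_RGT_0. assert (1 <= INR m) by (apply (le_INR 1); lia).
  pose proof (wallis_coef_pos m).
  destruct (wallis_integral_even_odd m) as [Weven Wodd].
  split.
  - pose proof (wallis_integral_decr (2 * m)) as D. rewrite Weven, Wodd in D.
    apply (Rmult_le_compat_r (2 * (2 * INR m + 1) * wallis_coef m)) in D; [| nra].
    rewrite Rinv_mult in D. field_simplify in D; [| lra ..].
    apply (Rmult_le_reg_r (2 * INR m + 1)); [lra |].
    unfold Rdiv. rewrite Rmult_assoc, Rinv_l; nra.
  - destruct m as [|m]; [lia |].
    destruct (wallis_integral_even_odd m) as [_ Wodd'].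
    pose proof (wallis_integral_decr (S (2 * m))) as D.
    replace (S (S (2 * m))) with (2 * S m)%nat in D by lia.
    rewrite Weven, Wodd', wallis_coef_succ in D. rewrite wallis_coef_succ, S_INR.
    pose proof (wallis_coef_pos m). pose proof (pos_INR m).
    apply Rmult_le_compat_r with (r := (2 * INR m + 1) * wallis_coef m) in D; [| nra].
    rewrite Rinv_l in D; [| nra].
    replace (PI * (INR m + 1) * (wallis_coef m * (2 * INR m + 1) / (2 * INR m + 2)) ^ 2)
      with (PI / 2 * (wallis_coef m * (2 * INR m + 1) / (2 * INR m + 2))
            * ((2 * INR m + 1) * wallis_coef m)) by (field; lra).
    exact D.
Qed.

Lemma stirling_ratio_double (m : nat) : (1 <= m)%nat ->
  stirling_ratio (2 * m) = stirling_ratio m ^ 2 * (wallis_coef m * sqrt (PI * INR m)).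
Proof.
  intros Hm. assert (1 <= INR m) by (apply (le_INR 1); lia). pose proof PI_RGT_0.
  assert (H2m : INR (2 * m) = 2 * INR m) by (rewrite mult_INR; simpl; ring).
  assert (Hsqrt2 : sqrt (2 * PI * (2 * INR m)) = 2 * sqrt (PI * INR m)).
  { replace (2 * PI * (2 * INR m)) with (2 * 2 * (PI * INR m)) by ring.
    rewrite sqrt_mult, sqrt_square by nra. reflexivity. }
  assert (Hsqrt1 : sqrt (2 * PI * INR m) ^ 2 = 2 * sqrt (PI * INR m) ^ 2)
    by (rewrite !pow2_sqrt by nra; ring).
  assert (Hpow : (2 * INR m / exp 1) ^ (2 * m) = 4 ^ m * ((INR m / exp 1) ^ m) ^ 2).
  { rewrite pow_mult.
    replace ((2 * INR m / exp 1) ^ 2) with (4 * (INR m / exp 1) ^ 2)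
      by (field; apply Rgt_not_eq, exp_pos).
    rewrite Rpow_mult_distr, <- !pow_mult, Nat.mul_comm. reflexivity. }
  unfold stirling_ratio, wallis_coef. rewrite H2m, Hsqrt2, Hpow.
  unfold Rdiv. rewrite !Rpow_mult_distr, !pow_inv, Rpow_mult_distr, Hsqrt1.
  assert (0 < sqrt (PI * INR m)) by (apply sqrt_lt_R0; nra).
  assert (0 < INR (fact m)) by (apply lt_0_INR, lt_O_fact).
  assert (0 < 4 ^ m) by (apply pow_lt; lra).
  assert (0 < exp 1 ^ m) by (apply pow_lt, exp_pos).
  assert (0 < INR m ^ m) by (apply pow_lt; lra).
  field. repeat split; lra.
Qed.

Definition stirling_err (x : R) : R := exp (x / 4) * sqrt (1 + x / 2).

Lemma stirling_err_pos (x : R) : 0 <= x -> 0 < stirling_err x.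
Proof. intros Hx. apply Rmult_lt_0_compat; [apply exp_pos | apply sqrt_lt_R0; lra]. Qed.

Lemma stirling_err_le_compat (x y : R) : 0 <= x <= y -> stirling_err x <= stirling_err y.
Proof.
  intros Hxy. apply Rmult_le_compat; [apply Rlt_le, exp_pos | apply sqrt_pos | |].
  - apply exp_le_exp; lra.
  - apply sqrt_le_1_alt; lra.
Qed.

(* Telescoping [stirling_ratio_shift] from [m] to [2 m] and comparing with the exact
   value of [stirling_ratio (2 m)] given by Wallis' formula. *)
Lemma stirling_bounds (m : nat) : (1 <= m)%nat ->
  exp (- (/ INR m / 4)) <= stirling_ratio m <= stirling_err (/ INR m).
Proof.
  intros Hm. assert (1 <= INR m) by (apply (le_INR 1); lia). pose proof PI_RGT_0.
  destruct (stirling_ratio_shift m m Hm) as [s [Hs Hshift]].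
  replace (m + m)%nat with (2 * m)%nat in Hshift by lia.
  replace (/ 2 * (/ INR m - / INR (m + m))) with (/ INR m / 4) in Hs
    by (rewrite plus_INR; field; lra).
  apply Rabs_le_between in Hs.
  rewrite stirling_ratio_double in Hshift by exact Hm.
  pose proof (wallis_bounds m Hm) as W. pose proof (wallis_coef_pos m).
  set (rho := wallis_coef m * sqrt (PI * INR m)) in *.
  assert (Hrho2 : rho ^ 2 = PI * INR m * wallis_coef m ^ 2).
  { unfold rho. rewrite Rpow_mult_distr, pow2_sqrt by nra. ring. }
  assert (Hrho : 0 < rho) by (unfold rho; apply Rmult_lt_0_compat; [| apply sqrt_lt_R0]; nra).
  assert (Hst : 0 < stirling_ratio m) by (apply stirling_ratio_pos; exact Hm).
  assert (Hst_rho : stirling_ratio m * rho = exp s)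
    by (apply (Rmult_eq_reg_l (stirling_ratio m)); [rewrite <- Hshift; ring | lra]).
  assert (Hrho1 : rho <= 1) by nra.
  assert (Hrho_inv : / rho <= sqrt (1 + / INR m / 2)).
  { rewrite <- (sqrt_square (/ rho)) by (apply Rlt_le, Rinv_0_lt_compat; lra).
    apply sqrt_le_1_alt.
    replace (/ rho * / rho) with (/ rho ^ 2) by (field; lra).
    replace (1 + / INR m / 2) with (/ (2 * INR m / (2 * INR m + 1))) by (field; lra).
    rewrite Hrho2. apply Rinv_le_contravar; [apply Rdiv_lt_0_compat |]; lra. }
  split.
  - apply Rle_trans with (exp s); [apply exp_le_exp; lra |]. nra.
  - unfold stirling_err.
    replace (stirling_ratio m) with (exp s * / rho) by (rewrite <- Hst_rho; field; lra).
    apply Rmult_le_compat; [apply Rlt_le, exp_pos | apply Rlt_le, Rinv_0_lt_compat; lra | |].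
    + apply exp_le_exp; lra.
    + exact Hrho_inv.
Qed.

Lemma inv_stirling_ratio_le (m : nat) : (1 <= m)%nat -> / stirling_ratio m <= exp (/ INR m / 4).
Proof.
  intros Hm. destruct (stirling_bounds m Hm) as [Hlo _].
  rewrite <- (Rinv_inv (exp (/ INR m / 4))), <- exp_Ropp.
  apply Rinv_le_contravar; [apply exp_pos | exact Hlo].
Qed.

Lemma inv_stirling_ratio_ge (m : nat) : (1 <= m)%nat ->
  / stirling_err (/ INR m) <= / stirling_ratio m.
Proof.
  intros Hm. destruct (stirling_bounds m Hm) as [_ Hhi].
  apply Rinv_le_contravar; [apply stirling_ratio_pos | ]; assumption.
Qed.

(** * The binomial distribution *)

Lemma nondecr_on_range (f : nat -> R) (a b : nat) :
  (forall i, (a <= i < b)%nat -> f i <= f (S i)) ->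
  forall i j, (a <= i <= j)%nat -> (j <= b)%nat -> f i <= f j.
Proof.
  intros Hf i j [Hai Hij]. induction Hij as [| j Hij IH]; intros Hjb; [lra |].
  apply Rle_trans with (f j); [apply IH; lia | apply Hf; lia].
Qed.

Lemma nonincr_on_range (f : nat -> R) (a b : nat) :
  (forall i, (a <= i < b)%nat -> f (S i) <= f i) ->
  forall i j, (a <= i <= j)%nat -> (j <= b)%nat -> f j <= f i.
Proof.
  intros Hf i j Hij Hjb.
  enough (- f i <= - f j) by lra.
  apply (nondecr_on_range (fun i => - f i) a b); [intros k Hk; specialize (Hf k Hk); lra | lia ..].
Qed.

Lemma sum_f_R0_le_of_nonneg (f : nat -> R) (m n : nat) :
  (forall i, 0 <= f i) -> (m <= n)%nat -> sum_f_R0 f m <= sum_f_R0 f n.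
Proof.
  intros Hf Hmn. induction Hmn as [| n Hmn IH]; [lra |]. simpl. pose proof (Hf (S n)). lra.
Qed.

Lemma sum_f_R0_shift_le (f : nat -> R) (m w n : nat) :
  (forall i, 0 <= f i) -> (m + w <= n)%nat ->
  sum_f_R0 (fun i => f (m + i)%nat) w <= sum_f_R0 f n.
Proof.
  intros Hf Hmw. apply Rle_trans with (sum_f_R0 f (m + w)); [| now apply sum_f_R0_le_of_nonneg].
  clear Hmw. induction w as [| w IH]; simpl.
  - rewrite Nat.add_0_r. destruct m as [| m]; simpl; [lra |].
    pose proof (cond_pos_sum f m Hf). lra.
  - replace (m + S w)%nat with (S (m + w)) by lia. simpl. lra.
Qed.

Definition binom_pmf (p : R) (n k : nat) : R := Binomial.C n k * p ^ k * (1 - p) ^ (n - k).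

Section BinomialLaw.

Variable p : R.
Hypothesis Hp : 0 < p < 1.

Lemma binom_pmf_nonneg (n k : nat) : 0 <= binom_pmf p n k.
Proof.
  unfold binom_pmf, Binomial.C.
  apply Rmult_le_pos; [apply Rmult_le_pos |]; [| apply pow_le; lra ..].
  apply Rmult_le_pos; [apply pos_INR |]. apply Rlt_le, Rinv_0_lt_compat.
  rewrite <- mult_INR. apply lt_0_INR, Nat.mul_pos_pos; apply lt_O_fact.
Qed.

Lemma binom_pmf_sum (n : nat) : sum_f_R0 (binom_pmf p n) n = 1.
Proof.
  unfold binom_pmf. rewrite <- binomial. replace (p + (1 - p)) with 1 by ring. apply pow1.
Qed.

Lemma binom_pmf_succ (n i : nat) : (i < n)%nat ->
  (INR i + 1) * (1 - p) * binom_pmf p n (S i) = (INR n - INR i) * p * binom_pmf p n i.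
Proof.
  intros Hi. unfold binom_pmf. rewrite pascal_step3 by exact Hi.
  rewrite minus_INR, S_INR by lia.
  replace (n - i)%nat with (S (n - S i)) by lia. simpl pow.
  pose proof (pos_INR i). field. lra.
Qed.

Definition binom_mode (n : nat) : nat := Z.to_nat (Int_part (INR (S n) * p)).

Lemma binom_mode_spec (n : nat) :
  INR (binom_mode n) <= INR (S n) * p < INR (binom_mode n) + 1 /\ (binom_mode n <= n)%nat.
Proof.
  pose proof (base_Int_part (INR (S n) * p)) as [Hfloor Hceil].
  assert (0 < INR (S n)) by (apply lt_0_INR; lia).
  assert (Hnonneg : (0 <= Int_part (INR (S n) * p))%Z).
  { enough (Hgt : (-1 < Int_part (INR (S n) * p))%Z) by lia.
    apply lt_IZR. assert (0 <= INR (S n) * p) by nra. lra. }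
  assert (Hmode : INR (binom_mode n) = IZR (Int_part (INR (S n) * p))).
  { unfold binom_mode. rewrite INR_IZR_INZ, Z2Nat.id by exact Hnonneg. reflexivity. }
  rewrite Hmode. split; [lra |].
  apply Nat.lt_succ_r, INR_lt. rewrite Hmode. nra.
Qed.

Lemma binom_pmf_incr_below_mode (n i : nat) : (i < binom_mode n)%nat ->
  binom_pmf p n i <= binom_pmf p n (S i).
Proof.
  intros Hi. destruct (binom_mode_spec n) as [[Hlo _] Hmn]. rewrite S_INR in Hlo.
  assert (Hi1 : INR i + 1 <= INR (binom_mode n)) by (rewrite <- S_INR; apply le_INR; lia).
  assert (Hcoef : (INR i + 1) * (1 - p) <= (INR n - INR i) * p) by lra.
  pose proof (pos_INR i).
  apply (Rmult_le_reg_l ((INR i + 1) * (1 - p))); [apply Rmult_lt_0_compat; lra |].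
  rewrite binom_pmf_succ by lia. apply Rmult_le_compat_r; [apply binom_pmf_nonneg | exact Hcoef].
Qed.

Lemma binom_pmf_decr_above_mode (n i : nat) : (binom_mode n <= i < n)%nat ->
  binom_pmf p n (S i) <= binom_pmf p n i.
Proof.
  intros Hi. destruct (binom_mode_spec n) as [[_ Hhi] _]. rewrite S_INR in Hhi.
  assert (Hmi : INR (binom_mode n) <= INR i) by (apply le_INR; lia).
  assert (Hin : INR i <= INR n) by (apply le_INR; lia).
  assert (Hcoef : (INR n - INR i) * p <= (INR i + 1) * (1 - p)) by lra.
  pose proof (pos_INR i).
  apply (Rmult_le_reg_l ((INR i + 1) * (1 - p))); [apply Rmult_lt_0_compat; lra |].
  rewrite binom_pmf_succ by lia. apply Rmult_le_compat_r; [apply binom_pmf_nonneg | exact Hcoef].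
Qed.

Lemma binom_pmf_le_mode (n k : nat) : (k <= n)%nat ->
  binom_pmf p n k <= binom_pmf p n (binom_mode n).
Proof.
  intros Hk. destruct (binom_mode_spec n) as [_ Hmn].
  destruct (Nat.le_gt_cases k (binom_mode n)).
  - apply (nondecr_on_range _ 0 (binom_mode n)); [| lia ..].
    intros i Hi. apply binom_pmf_incr_below_mode. lia.
  - apply (nonincr_on_range _ (binom_mode n) n); [exact (binom_pmf_decr_above_mode n) | lia ..].
Qed.

Lemma sum_pow_binom_pmf_le_mode (n d : nat) :
  sum_f_R0 (fun k => binom_pmf p n k ^ S d) n <= binom_pmf p n (binom_mode n) ^ d.
Proof.
  rewrite <- (Rmult_1_r (_ ^ d)), <- (binom_pmf_sum n), scal_sum.
  apply sum_Rle. intros k Hk. simpl.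
  apply Rmult_le_compat_l; [apply binom_pmf_nonneg |].
  apply pow_incr. split; [apply binom_pmf_nonneg | apply binom_pmf_le_mode; exact Hk].
Qed.

(* Past the mode the pmf decreases, so each of the [w + 1] terms from [m] to [m + w]
   dominates the last one. *)
Lemma sum_pow_binom_pmf_ge_window (n d w : nat) : (binom_mode n + w <= n)%nat ->
  binom_pmf p n (binom_mode n + w) ^ d * INR (S w) <= sum_f_R0 (fun k => binom_pmf p n k ^ d) n.
Proof.
  intros Hw. rewrite <- sum_cte.
  apply Rle_trans with (sum_f_R0 (fun i => binom_pmf p n (binom_mode n + i) ^ d) w).
  - apply sum_Rle. intros i Hi. apply pow_incr. split; [apply binom_pmf_nonneg |].
    apply (nonincr_on_range _ (binom_mode n) n); [apply binom_pmf_decr_above_mode | lia ..].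
  - apply (sum_f_R0_shift_le (fun k => binom_pmf p n k ^ d)); [| exact Hw].
    intros k. apply pow_le, binom_pmf_nonneg.
Qed.

End BinomialLaw.

Lemma binom_pow_sum_eq (r : R) (d n : nat) : 0 < r ->
  binom_pow_sum d n (r ^ d) =
  (1 + r) ^ (d * n) * sum_f_R0 (fun k => binom_pmf (r / (1 + r)) n k ^ d) n.
Proof.
  intros Hr. unfold binom_pow_sum. rewrite scal_sum. apply sum_eq. intros k Hk.
  assert (Hterm : Binomial.C n k * r ^ k = (1 + r) ^ n * binom_pmf (r / (1 + r)) n k).
  { unfold binom_pmf. replace (1 - r / (1 + r)) with (/ (1 + r)) by (field; lra).
    replace n with (k + (n - k))%nat at 2 by lia. rewrite pow_add.
    unfold Rdiv. rewrite Rpow_mult_distr, !pow_inv.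
    assert (0 < (1 + r) ^ k) by (apply pow_lt; lra).
    assert (0 < (1 + r) ^ (n - k)) by (apply pow_lt; lra).
    field. lra. }
  rewrite <- !pow_mult, (Nat.mul_comm d k), (Nat.mul_comm d n), !pow_mult.
  rewrite <- Rpow_mult_distr, Hterm, Rpow_mult_distr. ring.
Qed.

(** * Local estimates via Stirling's formula *)

(* [exp (- n D(k/n || p))] with [n = k + l], the non-polynomial part of [binom_pmf p n k]. *)
Definition entropy_factor (p : R) (k l : nat) : R :=
  (INR (k + l) * p / INR k) ^ k * (INR (k + l) * (1 - p) / INR l) ^ l.

Section LocalEstimates.

Variable p : R.
Hypothesis Hp : 0 < p < 1.

Lemma ln_entropy_factor (k l : nat) : (1 <= k)%nat -> (1 <= l)%nat ->
  0 < entropy_factor p k l /\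
  ln (entropy_factor p k l) =
  INR k * ln (INR (k + l) * p / INR k) + INR l * ln (INR (k + l) * (1 - p) / INR l).
Proof.
  intros Hk Hl. assert (1 <= INR k) by (apply (le_INR 1); lia).
  assert (1 <= INR l) by (apply (le_INR 1); lia). rewrite plus_INR.
  assert (0 < (INR k + INR l) * p / INR k) by (apply Rdiv_lt_0_compat; nra).
  assert (0 < (INR k + INR l) * (1 - p) / INR l) by (apply Rdiv_lt_0_compat; nra).
  unfold entropy_factor. rewrite plus_INR.
  split; [apply Rmult_lt_0_compat; apply pow_lt; assumption |].
  rewrite ln_mult, !ln_pow by (apply pow_lt || idtac; assumption). reflexivity.
Qed.

(* Both bounds come from [1 - 1/x <= ln x <= x - 1] applied to each logarithm. *)
Lemma entropy_factor_le_1 (k l : nat) : (1 <= k)%nat -> (1 <= l)%nat ->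
  entropy_factor p k l <= 1.
Proof.
  intros Hk Hl. destruct (ln_entropy_factor k l Hk Hl) as [Hpos Hln].
  assert (1 <= INR k) by (apply (le_INR 1); lia).
  assert (1 <= INR l) by (apply (le_INR 1); lia). rewrite plus_INR in Hln.
  assert (Hx : 0 < (INR k + INR l) * p / INR k) by (apply Rdiv_lt_0_compat; nra).
  assert (Hy : 0 < (INR k + INR l) * (1 - p) / INR l) by (apply Rdiv_lt_0_compat; nra).
  apply ln_le_sub_1, Rmult_le_compat_l with (r := INR k) in Hx; [| lra].
  apply ln_le_sub_1, Rmult_le_compat_l with (r := INR l) in Hy; [| lra].
  replace (INR k * ((INR k + INR l) * p / INR k - 1))
    with (- (INR l * ((INR k + INR l) * (1 - p) / INR l - 1))) in Hx by (field; lra).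
  rewrite <- (exp_ln _ Hpos), <- exp_0. apply exp_le_exp. lra.
Qed.

Lemma entropy_factor_ge (k l : nat) : (1 <= k)%nat -> (1 <= l)%nat ->
  exp (- (INR k - INR (k + l) * p) ^ 2 / (INR (k + l) * p * (1 - p))) <= entropy_factor p k l.
Proof.
  intros Hk Hl. destruct (ln_entropy_factor k l Hk Hl) as [Hpos Hln].
  assert (1 <= INR k) by (apply (le_INR 1); lia).
  assert (1 <= INR l) by (apply (le_INR 1); lia). rewrite plus_INR in Hln |- *.
  assert (Hx : 0 < (INR k + INR l) * p / INR k) by (apply Rdiv_lt_0_compat; nra).
  assert (Hy : 0 < (INR k + INR l) * (1 - p) / INR l) by (apply Rdiv_lt_0_compat; nra).
  apply one_sub_inv_le_ln, Rmult_le_compat_l with (r := INR k) in Hx; [| lra].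
  apply one_sub_inv_le_ln, Rmult_le_compat_l with (r := INR l) in Hy; [| lra].
  rewrite <- (exp_ln _ Hpos). apply exp_le_exp. rewrite Hln.
  replace (- (INR k - (INR k + INR l) * p) ^ 2 / ((INR k + INR l) * p * (1 - p)))
    with (INR k * (1 - / ((INR k + INR l) * p / INR k))
          + INR l * (1 - / ((INR k + INR l) * (1 - p) / INR l))) by (field; repeat split; lra).
  lra.
Qed.

Lemma fact_eq_stirling_ratio (j : nat) : (1 <= j)%nat ->
  INR (fact j) = stirling_ratio j * (sqrt (2 * PI * INR j) * (INR j / exp 1) ^ j).
Proof.
  intros Hj. assert (1 <= INR j) by (apply (le_INR 1); lia). pose proof PI_RGT_0.
  unfold stirling_ratio. field. split.
  - apply Rgt_not_eq, pow_lt, Rdiv_lt_0_compat; [lra | apply exp_pos].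
  - apply Rgt_not_eq, sqrt_lt_R0. nra.
Qed.

Lemma binom_pmf_stirling (k l : nat) : (1 <= k)%nat -> (1 <= l)%nat ->
  binom_pmf p (k + l) k =
  stirling_ratio (k + l) / (stirling_ratio k * stirling_ratio l) *
  sqrt (INR (k + l) / (2 * PI * INR k * INR l)) * entropy_factor p k l.
Proof.
  intros Hk Hl.
  assert (1 <= INR k) by (apply (le_INR 1); lia).
  assert (1 <= INR l) by (apply (le_INR 1); lia). pose proof PI_RGT_0.
  unfold binom_pmf, Binomial.C, entropy_factor. replace (k + l - k)%nat with l by lia.
  rewrite (fact_eq_stirling_ratio (k + l)), (fact_eq_stirling_ratio k),
    (fact_eq_stirling_ratio l) by lia.
  assert (Hsqrt : sqrt (2 * PI * INR (k + l)) =
     sqrt (INR (k + l) / (2 * PI * INR k * INR l)) * sqrt (2 * PI * INR k) * sqrt (2 * PI * INR l)).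
  { assert (0 < 2 * PI * INR k * INR l)
      by (apply Rmult_lt_0_compat; [apply Rmult_lt_0_compat; [apply Rmult_lt_0_compat |] |]; lra).
    assert (0 < INR (k + l) / (2 * PI * INR k * INR l))
      by (apply Rdiv_lt_0_compat; [rewrite plus_INR |]; lra).
    rewrite <- !sqrt_mult by nra. f_equal. rewrite plus_INR. field. lra. }
  rewrite Hsqrt. set (n := INR (k + l)) in *.
  assert (Hn : 2 <= n) by (unfold n; rewrite plus_INR; lra).
  assert (Hk_pow : (n * p / INR k) ^ k = (n / exp 1) ^ k * p ^ k / (INR k / exp 1) ^ k).
  { unfold Rdiv. rewrite !Rpow_mult_distr, !pow_inv. field.
    split; apply Rgt_not_eq, pow_lt; [apply exp_pos | lra]. }
  assert (Hl_pow : (n * (1 - p) / INR l) ^ l = (n / exp 1) ^ l * (1 - p) ^ l / (INR l / exp 1) ^ l).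
  { unfold Rdiv. rewrite !Rpow_mult_distr, !pow_inv. field.
    split; apply Rgt_not_eq, pow_lt; [apply exp_pos | lra]. }
  rewrite pow_add, Hk_pow, Hl_pow.
  assert (0 < stirling_ratio k) by (apply stirling_ratio_pos; lia).
  assert (0 < stirling_ratio l) by (apply stirling_ratio_pos; lia).
  assert (0 < sqrt (2 * PI * INR k)) by (apply sqrt_lt_R0; nra).
  assert (0 < sqrt (2 * PI * INR l)) by (apply sqrt_lt_R0; nra).
  assert (0 < (INR k / exp 1) ^ k) by (apply pow_lt, Rdiv_lt_0_compat; [lra | apply exp_pos]).
  assert (0 < (INR l / exp 1) ^ l) by (apply pow_lt, Rdiv_lt_0_compat; [lra | apply exp_pos]).
  field. repeat split; lra.
Qed.

Lemma sqrt_mul_sqrt_div (n a : R) : 0 <= n -> 0 < a -> sqrt n * sqrt (n / a) = sqrt (n * n / a).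
Proof.
  intros Hn Ha. rewrite <- sqrt_mult by (try apply Rdiv_le_0_compat; lra).
  f_equal. field. lra.
Qed.

Lemma sqrt_binom_pmf_le (k l : nat) : (1 <= k)%nat -> (1 <= l)%nat ->
  sqrt (INR (k + l)) * binom_pmf p (k + l) k <=
  stirling_err (/ INR (k + l)) * exp (/ INR k / 4) * exp (/ INR l / 4) *
  sqrt (INR (k + l) * INR (k + l) / (2 * PI * INR k * INR l)).
Proof.
  intros Hk Hl. pose proof PI_RGT_0.
  assert (1 <= INR k) by (apply (le_INR 1); lia).
  assert (1 <= INR l) by (apply (le_INR 1); lia).
  assert (Hkl : 0 < 2 * PI * INR k * INR l)
    by (apply Rmult_lt_0_compat; [apply Rmult_lt_0_compat; [apply Rmult_lt_0_compat |] |]; lra).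
  rewrite binom_pmf_stirling by assumption.
  pose proof (entropy_factor_le_1 k l Hk Hl) as Hent_le.
  destruct (ln_entropy_factor k l Hk Hl) as [Hent_pos _].
  destruct (stirling_bounds (k + l) ltac:(lia)) as [_ Hst].
  pose proof (inv_stirling_ratio_le k Hk) as Hinv_k.
  pose proof (inv_stirling_ratio_le l Hl) as Hinv_l.
  pose proof (stirling_ratio_pos k Hk). pose proof (stirling_ratio_pos l Hl).
  pose proof (stirling_ratio_pos (k + l) ltac:(lia)).
  set (n := INR (k + l)) in *.
  set (sq := sqrt (n * n / (2 * PI * INR k * INR l))).
  replace (sqrt n * (stirling_ratio (k + l) / (stirling_ratio k * stirling_ratio l) *
             sqrt (n / (2 * PI * INR k * INR l)) * entropy_factor p k l))
    with (stirling_ratio (k + l) * / stirling_ratio k * / stirling_ratio l * sq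
          * entropy_factor p k l)
    by (unfold sq; rewrite <- sqrt_mul_sqrt_div by (unfold n; apply pos_INR || lra); field; lra).
  assert (0 <= sq) by apply sqrt_pos.
  assert (0 <= / stirling_ratio k) by (apply Rlt_le, Rinv_0_lt_compat; lra).
  assert (0 <= / stirling_ratio l) by (apply Rlt_le, Rinv_0_lt_compat; lra).
  apply Rle_trans with (stirling_ratio (k + l) * / stirling_ratio k * / stirling_ratio l * sq).
  - rewrite <- (Rmult_1_r (_ * _ * _ * sq)) at 2.
    apply Rmult_le_compat_l; [| exact Hent_le].
    apply Rmult_le_pos; [apply Rmult_le_pos; [apply Rmult_le_pos |] |]; lra.
  - apply Rmult_le_compat_r; [assumption |].
    apply Rmult_le_compat; [apply Rmult_le_pos; lra | lra | | exact Hinv_l].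
    apply Rmult_le_compat; lra.
Qed.

Lemma sqrt_binom_pmf_ge (k l : nat) : (1 <= k)%nat -> (1 <= l)%nat ->
  exp (- (/ INR (k + l) / 4)) / (stirling_err (/ INR k) * stirling_err (/ INR l)) *
  sqrt (2 / PI) * exp (- (INR k - INR (k + l) * p) ^ 2 / (INR (k + l) * p * (1 - p)))
  <= sqrt (INR (k + l)) * binom_pmf p (k + l) k.
Proof.
  intros Hk Hl. pose proof PI_RGT_0.
  assert (1 <= INR k) by (apply (le_INR 1); lia).
  assert (1 <= INR l) by (apply (le_INR 1); lia).
  assert (Hkl : 0 < 2 * PI * INR k * INR l)
    by (apply Rmult_lt_0_compat; [apply Rmult_lt_0_compat; [apply Rmult_lt_0_compat |] |]; lra).
  assert (Hn : INR (k + l) = INR k + INR l) by apply plus_INR.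
  rewrite binom_pmf_stirling by assumption.
  pose proof (entropy_factor_ge k l Hk Hl) as Hent_ge.
  destruct (stirling_bounds (k + l) ltac:(lia)) as [Hst _].
  pose proof (inv_stirling_ratio_ge k Hk) as Hinv_k.
  pose proof (inv_stirling_ratio_ge l Hl) as Hinv_l.
  assert (0 < stirling_err (/ INR k)) by (apply stirling_err_pos, Rlt_le, Rinv_0_lt_compat; lra).
  assert (0 < stirling_err (/ INR l)) by (apply stirling_err_pos, Rlt_le, Rinv_0_lt_compat; lra).
  set (n := INR (k + l)) in *.
  (* [2 / PI <= n^2 / (2 PI k l)] is AM-GM [4 k l <= (k + l)^2]. *)
  assert (Hsq : sqrt (2 / PI) <= sqrt (n * n / (2 * PI * INR k * INR l))).
  { apply sqrt_le_1_alt.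
    replace (2 / PI) with (4 * (INR k * INR l) / (2 * PI * INR k * INR l)) by (field; lra).
    apply Rmult_le_compat_r; [apply Rlt_le, Rinv_0_lt_compat; lra |].
    rewrite Hn. pose proof (pow2_ge_0 (INR k - INR l)). nra. }
  replace (sqrt n * (stirling_ratio (k + l) / (stirling_ratio k * stirling_ratio l) *
             sqrt (n / (2 * PI * INR k * INR l)) * entropy_factor p k l))
    with (stirling_ratio (k + l) * (/ stirling_ratio k * / stirling_ratio l) *
          sqrt (n * n / (2 * PI * INR k * INR l)) * entropy_factor p k l)
    by (rewrite <- sqrt_mul_sqrt_div by (unfold n; apply pos_INR || lra);
        pose proof (stirling_ratio_pos k Hk); pose proof (stirling_ratio_pos l Hl); field; lra).
  unfold Rdiv at 1. rewrite Rinv_mult.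
  pose proof (exp_pos (- (/ n / 4))).
  assert (0 <= / stirling_err (/ INR k)) by (apply Rlt_le, Rinv_0_lt_compat; lra).
  assert (0 <= / stirling_err (/ INR l)) by (apply Rlt_le, Rinv_0_lt_compat; lra).
  apply Rmult_le_compat; [| apply Rlt_le, exp_pos | | exact Hent_ge].
  - apply Rmult_le_pos; [| apply sqrt_pos]. apply Rmult_le_pos; [lra | apply Rmult_le_pos; lra].
  - apply Rmult_le_compat;
      [apply Rmult_le_pos; [lra | apply Rmult_le_pos; lra] | apply sqrt_pos | | exact Hsq].
    apply Rmult_le_compat; [lra | apply Rmult_le_pos; lra | exact Hst |].
    apply Rmult_le_compat; lra.
Qed.

End LocalEstimates.

(** * Behaviour near the mode *)

Definition binom_peak (p : R) : R := / sqrt (2 * PI * p * (1 - p)).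

(* Bounds on [sqrt n * binom_pmf p n k] in terms of [u = 1/n] (at the mode) and
   [v = 1/sqrt n] (at distance [sqrt n / 2] above it); they are continuous at [0]. *)
Definition mode_profile (p u : R) : R :=
  stirling_err u * exp (u / (p - u) / 4) * exp (u / (1 - p - u) / 4) /
  sqrt (2 * PI * (p - u) * (1 - p - u)).

Definition window_profile (p v : R) : R :=
  exp (- (v ^ 2 / 4)) /
  (stirling_err (v ^ 2 / (p - v ^ 2)) * stirling_err (v ^ 2 / (1 - p - v ^ 2 - v / 2))) *
  sqrt (2 / PI) * exp (- (v + / 2) ^ 2 / (p * (1 - p))).

Lemma Un_cv_inv_INR : Un_cv (fun n => / INR n) 0.
Proof.
  apply is_lim_seq_Reals.
  apply (is_lim_seq_inv INR p_infty is_lim_seq_INR). discriminate.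
Qed.

Lemma eventually_between_of_Un_cv (u : nat -> R) (l a b : R) : Un_cv u l -> a < l < b ->
  exists N, forall n, (N <= n)%nat -> a < u n < b.
Proof.
  intros Hu Hab. destruct (Hu (Rmin (l - a) (b - l)) ltac:(apply Rmin_glb_lt; lra)) as [N HN].
  exists N. intros n Hn. specialize (HN n Hn). unfold R_dist in HN.
  pose proof (Rmin_l (l - a) (b - l)). pose proof (Rmin_r (l - a) (b - l)).
  apply Rabs_def2 in HN. lra.
Qed.

Lemma nat_sqrt_half_bounds (n : nat) :
  2 * INR (Nat.sqrt n / 2) <= sqrt (INR n) < 2 * INR (Nat.sqrt n / 2) + 2.
Proof.
  destruct (Nat.sqrt_spec n (Nat.le_0_l n)) as [Hlo Hhi].
  set (s := Nat.sqrt n) in *.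
  assert (Hhalf : (2 * (s / 2) <= s <= 2 * (s / 2) + 1)%nat)
    by (pose proof (Nat.div_mod s 2); pose proof (Nat.mod_upper_bound s 2); lia).
  apply le_INR in Hlo. apply lt_INR in Hhi. rewrite !mult_INR, S_INR in *.
  set (w := (s / 2)%nat) in *.
  destruct Hhalf as [Hh1 Hh2]. apply le_INR in Hh1, Hh2.
  rewrite mult_INR in Hh1. rewrite plus_INR, mult_INR in Hh2. simpl INR in Hh1, Hh2.
  pose proof (pos_INR s).
  assert (Hs : INR s <= sqrt (INR n)).
  { rewrite <- (sqrt_square (INR s)) by lra. apply sqrt_le_1_alt. exact Hlo. }
  assert (Hs1 : sqrt (INR n) < INR s + 1).
  { rewrite <- (sqrt_square (INR s + 1)) by lra.
    apply sqrt_lt_1_alt. split; [apply pos_INR | exact Hhi]. }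
  lra.
Qed.

Section Asymptotics.

Variable p : R.
Hypothesis Hp : 0 < p < 1.

Lemma two_pi_var_pos : 0 < 2 * PI * p * (1 - p).
Proof.
  pose proof PI_RGT_0.
  apply Rmult_lt_0_compat; [apply Rmult_lt_0_compat; [apply Rmult_lt_0_compat |] |]; lra.
Qed.

Lemma mode_profile_0 : mode_profile p 0 = binom_peak p.
Proof.
  unfold mode_profile, binom_peak, stirling_err. rewrite !Rminus_0_r.
  unfold Rdiv. rewrite !Rmult_0_l, Rplus_0_r, exp_0, sqrt_1. ring.
Qed.

Lemma mode_profile_continuous : continuity_pt (mode_profile p) 0.
Proof.
  pose proof PI_RGT_0. apply ex_derive_continuity_pt.
  unfold mode_profile, stirling_err. auto_derive.
  rewrite Ropp_0, !Rplus_0_r. pose proof two_pi_var_pos.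
  repeat split; [lra | lra | lra | assumption | apply Rgt_not_eq, sqrt_lt_R0; assumption].
Qed.

Lemma window_profile_0 : window_profile p 0 = sqrt (2 / PI) * exp (- / (4 * (p * (1 - p)))).
Proof.
  unfold window_profile, stirling_err.
  replace (- (0 + / 2) ^ 2 / (p * (1 - p))) with (- / (4 * (p * (1 - p)))) by (field; lra).
  unfold Rdiv. rewrite pow_i by lia.
  rewrite !Rmult_0_l, Ropp_0, !Rplus_0_r, exp_0, sqrt_1. field.
Qed.

Lemma window_profile_continuous : continuity_pt (window_profile p) 0.
Proof.
  pose proof PI_RGT_0. apply ex_derive_continuity_pt.
  unfold window_profile, stirling_err. auto_derive.
  repeat split; try lra.
  apply Rgt_not_eq. repeat apply Rmult_lt_0_compat; try apply exp_pos; apply sqrt_lt_R0; lra.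
Qed.

Lemma sqrt_binom_pmf_le_mode_profile (k l : nat) (u : R) :
  0 < u -> INR (k + l) * u = 1 -> 0 < p - u -> 0 < 1 - p - u ->
  (p - u) * INR (k + l) <= INR k -> (1 - p - u) * INR (k + l) <= INR l ->
  sqrt (INR (k + l)) * binom_pmf p (k + l) k <= mode_profile p u.
Proof.
  intros Hu Hnu Hpu Hqu Hk Hl. pose proof PI_RGT_0.
  set (n := INR (k + l)) in *.
  assert (Hn : 0 < n) by nra.
  assert (Hk0 : 0 < INR k) by nra. assert (Hl0 : 0 < INR l) by nra.
  assert (Hk1 : (1 <= k)%nat) by (apply INR_lt; simpl; lra).
  assert (Hl1 : (1 <= l)%nat) by (apply INR_lt; simpl; lra).
  eapply Rle_trans; [apply sqrt_binom_pmf_le; assumption |].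
  replace (/ INR (k + l)) with u by (apply Rinv_eq_of_mul_eq_1; assumption).
  pose proof (Rinv_le_div_of_mul_le _ _ _ _ Hpu Hn Hnu Hk) as Hinv_k.
  pose proof (Rinv_le_div_of_mul_le _ _ _ _ Hqu Hn Hnu Hl) as Hinv_l.
  assert (Hvar : n * n / (2 * PI * INR k * INR l) <= / (2 * PI * (p - u) * (1 - p - u))).
  { replace (/ (2 * PI * (p - u) * (1 - p - u)))
      with (n * n / (2 * PI * (((p - u) * n) * ((1 - p - u) * n)))) by (field; lra).
    unfold Rdiv. apply Rmult_le_compat_l; [nra |].
    apply Rinv_le_contravar;
      [apply Rmult_lt_0_compat; [| apply Rmult_lt_0_compat; apply Rmult_lt_0_compat]; lra |].
    assert (Hkl : (p - u) * n * ((1 - p - u) * n) <= INR k * INR l)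
      by (apply Rmult_le_compat; nra).
    pose proof (Rmult_le_compat_l (2 * PI) _ _ ltac:(lra) Hkl). lra. }
  replace (mode_profile p u) with (stirling_err u * exp (u / (p - u) / 4) *
    exp (u / (1 - p - u) / 4) * sqrt (/ (2 * PI * (p - u) * (1 - p - u))))
    by (unfold mode_profile; rewrite sqrt_inv; reflexivity).
  pose proof (stirling_err_pos u ltac:(lra)).
  apply Rmult_le_compat; [| apply sqrt_pos | | apply sqrt_le_1_alt, Hvar].
  - apply Rmult_le_pos; [apply Rmult_le_pos |]; [lra | apply Rlt_le, exp_pos ..].
  - apply Rmult_le_compat;
      [apply Rmult_le_pos; [lra | apply Rlt_le, exp_pos] | apply Rlt_le, exp_pos | |].
    + apply Rmult_le_compat_l; [lra |]. apply exp_le_exp; lra.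
    + apply exp_le_exp; lra.
Qed.

Lemma window_profile_le_sqrt_binom_pmf (k l : nat) (v : R) :
  0 < v -> INR (k + l) * v ^ 2 = 1 -> 0 < p - v ^ 2 -> 0 < 1 - p - v ^ 2 - v / 2 ->
  (p - v ^ 2) * INR (k + l) <= INR k -> (1 - p - v ^ 2 - v / 2) * INR (k + l) <= INR l ->
  (INR k - INR (k + l) * p) ^ 2 <= INR (k + l) * (v + / 2) ^ 2 ->
  window_profile p v <= sqrt (INR (k + l)) * binom_pmf p (k + l) k.
Proof.
  intros Hv Hnv Hpv Hqv Hk Hl Hdev. pose proof PI_RGT_0.
  set (n := INR (k + l)) in *. set (v2 := v ^ 2) in *.
  assert (Hv2 : 0 < v2) by (unfold v2; apply pow_lt, Hv).
  assert (Hn : 0 < n) by nra.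
  assert (Hk0 : 0 < INR k) by nra. assert (Hl0 : 0 < INR l) by nra.
  assert (Hk1 : (1 <= k)%nat) by (apply INR_lt; simpl; lra).
  assert (Hl1 : (1 <= l)%nat) by (apply INR_lt; simpl; lra).
  eapply Rle_trans; [| apply sqrt_binom_pmf_ge; assumption].
  replace (/ INR (k + l)) with v2 by (apply Rinv_eq_of_mul_eq_1; assumption).
  pose proof (Rinv_le_div_of_mul_le _ _ _ _ Hpv Hn Hnv Hk) as Hinv_k.
  pose proof (Rinv_le_div_of_mul_le _ _ _ _ Hqv Hn Hnv Hl) as Hinv_l.
  assert (Herr : stirling_err (/ INR k) * stirling_err (/ INR l) <=
                 stirling_err (v2 / (p - v2)) * stirling_err (v2 / (1 - p - v2 - v / 2))).
  { pose proof (Rinv_0_lt_compat _ Hk0). pose proof (Rinv_0_lt_compat _ Hl0).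
    apply Rmult_le_compat; [apply Rlt_le, stirling_err_pos; lra .. | |];
      apply stirling_err_le_compat; lra. }
  assert (Hexp : exp (- (v + / 2) ^ 2 / (p * (1 - p))) <=
                 exp (- (INR k - n * p) ^ 2 / (n * p * (1 - p)))).
  { apply exp_le_exp. unfold Rdiv. rewrite !Ropp_mult_distr_l_reverse.
    apply Ropp_le_contravar.
    replace ((INR k - n * p) ^ 2 * / (n * p * (1 - p)))
      with ((INR k - n * p) ^ 2 * / n * / (p * (1 - p))) by (field; lra).
    apply Rmult_le_compat_r; [apply Rlt_le, Rinv_0_lt_compat; nra |].
    apply (Rmult_le_reg_r n); [exact Hn |]. rewrite Rmult_assoc, Rinv_l; lra. }
  pose proof (stirling_err_pos (/ INR k) (Rlt_le _ _ (Rinv_0_lt_compat _ Hk0))).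
  pose proof (stirling_err_pos (/ INR l) (Rlt_le _ _ (Rinv_0_lt_compat _ Hl0))).
  unfold window_profile. fold v2.
  apply Rmult_le_compat; [| apply Rlt_le, exp_pos | | exact Hexp].
  - apply Rmult_le_pos; [| apply sqrt_pos]. apply Rdiv_le_0_compat; [apply Rlt_le, exp_pos |].
    apply Rmult_lt_0_compat; apply stirling_err_pos; apply Rdiv_le_0_compat; lra.
  - apply Rmult_le_compat_r; [apply sqrt_pos |]. unfold Rdiv.
    apply Rmult_le_compat_l; [apply Rlt_le, exp_pos |].
    apply Rinv_le_contravar; [apply Rmult_lt_0_compat; assumption | exact Herr].
Qed.

Lemma binom_mode_position (n : nat) (u : R) : INR n * u = 1 ->
  (p - u) * INR n <= INR (binom_mode p n) /\
  (1 - p - u) * INR n <= INR (n - binom_mode p n).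
Proof.
  intros Hnu. destruct (binom_mode_spec p Hp n) as [[Hlo Hhi] Hmn].
  rewrite S_INR in Hlo, Hhi. rewrite minus_INR by exact Hmn. split; nra.
Qed.

Lemma sqrt_binom_pmf_mode_asymptotic : exists eps : nat -> R, Un_cv eps 0 /\
  exists N, forall n, (N <= n)%nat ->
  sqrt (INR n) * binom_pmf p n (binom_mode p n) <= binom_peak p + eps n.
Proof.
  exists (fun n => mode_profile p (/ INR n) - binom_peak p). split.
  - rewrite <- (Rminus_diag (binom_peak p)).
    apply CV_minus; [| apply is_lim_seq_Reals, is_lim_seq_const].
    rewrite <- mode_profile_0. exact (continuity_seq _ _ _ mode_profile_continuous Un_cv_inv_INR).
  - pose proof (Rmin_l p (1 - p)). pose proof (Rmin_r p (1 - p)).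
    destruct (eventually_between_of_Un_cv _ _ (- 1) (Rmin p (1 - p) / 2) Un_cv_inv_INR)
      as [N HN]; [split; [lra | apply Rdiv_lt_0_compat; [apply Rmin_glb_lt |]; lra] |].
    exists (Nat.max 1 N). intros n Hn. specialize (HN n ltac:(lia)).
    assert (Hn0 : 0 < INR n) by (apply lt_0_INR; lia).
    set (u := / INR n) in *.
    assert (Hu : 0 < u) by (apply Rinv_0_lt_compat, Hn0).
    assert (Hnu : INR n * u = 1) by (unfold u; field; lra).
    destruct (binom_mode_position n u Hnu) as [Hk Hl].
    pose proof (binom_mode_spec p Hp n) as [_ Hmn].
    enough (sqrt (INR n) * binom_pmf p n (binom_mode p n) <= mode_profile p u) by lra.
    replace n with (binom_mode p n + (n - binom_mode p n))%nat at 1 2 by lia.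
    apply sqrt_binom_pmf_le_mode_profile;
      replace (binom_mode p n + (n - binom_mode p n))%nat with n by lia; try assumption; lra.
Qed.

Lemma binom_window_position (n w : nat) (v : R) :
  0 < v -> v <= 1 -> v <= p / 2 -> v <= (1 - p) / 5 ->
  v * sqrt (INR n) = 1 -> 2 * INR w <= sqrt (INR n) ->
  (binom_mode p n + w <= n)%nat /\
  (p - v ^ 2) * INR n <= INR (binom_mode p n + w) /\
  (1 - p - v ^ 2 - v / 2) * INR n <= INR (n - (binom_mode p n + w)) /\
  (INR (binom_mode p n + w) - INR n * p) ^ 2 <= INR n * (v + / 2) ^ 2.
Proof.
  intros Hv Hv1 Hvp Hvq Hvs Hw.
  destruct (binom_mode_spec p Hp n) as [[Hlo Hhi] _]. rewrite S_INR in Hlo, Hhi.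
  set (sv := sqrt (INR n)) in *.
  assert (Hn : INR n = sv * sv) by (unfold sv; rewrite sqrt_sqrt; [reflexivity | apply pos_INR]).
  assert (Hnv2 : INR n * v ^ 2 = 1) by (rewrite Hn; simpl; nra).
  assert (Hnv : INR n * v = sv) by (rewrite Hn; nra).
  pose proof (pos_INR w). pose proof (pos_INR (binom_mode p n)).
  assert (Hk : INR (binom_mode p n + w) = INR (binom_mode p n) + INR w) by apply plus_INR.
  assert (Hq : 0 < (1 - p - v ^ 2 - v / 2) * INR n) by (apply Rmult_lt_0_compat; simpl; nra).
  assert (Hkn : (binom_mode p n + w <= n)%nat) by (apply INR_le; nra).
  split; [exact Hkn |]. rewrite minus_INR by exact Hkn.
  split; [| split]; [nra | nra |].
  assert (Hsq : INR n * (v + / 2) ^ 2 = (1 + sv / 2) ^ 2) by nra.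
  rewrite Hsq. apply pow_maj_Rabs. apply Rabs_le. nra.
Qed.

Lemma window_profile_0_pos : 0 < window_profile p 0.
Proof.
  pose proof PI_RGT_0. rewrite window_profile_0.
  apply Rmult_lt_0_compat; [apply sqrt_lt_R0, Rdiv_lt_0_compat; lra | apply exp_pos].
Qed.

Lemma sqrt_binom_pmf_window_asymptotic : exists N, forall n, (N <= n)%nat ->
  (binom_mode p n + Nat.sqrt n / 2 <= n)%nat /\
  4 / 5 * window_profile p 0 <=
  sqrt (INR n) * binom_pmf p n (binom_mode p n + Nat.sqrt n / 2).
Proof.
  pose proof window_profile_0_pos as HL0.
  assert (Hv_cv : Un_cv (fun n => sqrt (/ INR n)) 0).
  { rewrite <- sqrt_0.
    apply continuity_seq; [apply continuity_pt_sqrt, Rle_refl | exact Un_cv_inv_INR]. }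
  pose proof (continuity_seq _ _ _ window_profile_continuous Hv_cv) as Hprof_cv.
  set (eta := Rmin 1 (Rmin (p / 2) ((1 - p) / 5))).
  assert (Heta : 0 < eta) by (unfold eta; repeat apply Rmin_glb_lt; lra).
  assert (Heta_le : eta <= 1 /\ eta <= p / 2 /\ eta <= (1 - p) / 5).
  { unfold eta. pose proof (Rmin_l 1 (Rmin (p / 2) ((1 - p) / 5))).
    pose proof (Rmin_r 1 (Rmin (p / 2) ((1 - p) / 5))).
    pose proof (Rmin_l (p / 2) ((1 - p) / 5)). pose proof (Rmin_r (p / 2) ((1 - p) / 5)). lra. }
  destruct (eventually_between_of_Un_cv _ _ (- 1) eta Hv_cv ltac:(lra)) as [N1 HN1].
  destruct (eventually_between_of_Un_cv _ _ (4 / 5 * window_profile p 0) (2 * window_profile p 0)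
              Hprof_cv ltac:(lra)) as [N2 HN2].
  exists (Nat.max 1 (Nat.max N1 N2)). intros n Hn.
  specialize (HN1 n ltac:(lia)). specialize (HN2 n ltac:(lia)).
  assert (Hn0 : 0 < INR n) by (apply lt_0_INR; lia).
  set (v := sqrt (/ INR n)) in *.
  assert (Hv : 0 < v) by (apply sqrt_lt_R0, Rinv_0_lt_compat, Hn0).
  assert (Hvs : v * sqrt (INR n) = 1)
    by (unfold v; rewrite sqrt_inv; field; apply Rgt_not_eq, sqrt_lt_R0, Hn0).
  assert (Hnv2 : INR n * v ^ 2 = 1)
    by (unfold v; rewrite pow2_sqrt by (apply Rlt_le, Rinv_0_lt_compat, Hn0); field; lra).
  destruct (nat_sqrt_half_bounds n) as [Hw _].
  destruct (binom_window_position n (Nat.sqrt n / 2) v Hv ltac:(lra) ltac:(lra) ltac:(lra) Hvs Hw)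
    as [Hkn [Hk [Hl Hdev]]].
  split; [exact Hkn |].
  set (k := (binom_mode p n + Nat.sqrt n / 2)%nat) in *.
  assert (Hv2 : v ^ 2 <= v) by (simpl; nra).
  replace n with (k + (n - k))%nat at 1 2 by lia.
  eapply Rle_trans; [apply Rlt_le, HN2 |].
  apply window_profile_le_sqrt_binom_pmf;
    replace (k + (n - k))%nat with n by lia; try assumption; lra.
Qed.

(* With [t = 1 / (p (1 - p))] this is [sqrt t <= exp (t / 4)], from [sqrt t <= 1 + t / 4]. *)
Lemma binom_peak_exp_le_half_window_profile_0 :
  binom_peak p * exp (- / (2 * (p * (1 - p)))) <= window_profile p 0 / 2.
Proof.
  pose proof PI_RGT_0. assert (Hpq : 0 < p * (1 - p)) by nra.
  set (t := / (p * (1 - p))).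
  assert (Ht : 0 < t) by (apply Rinv_0_lt_compat, Hpq).
  assert (Hpeak : binom_peak p = sqrt t * / sqrt (2 * PI)).
  { unfold binom_peak, t.
    rewrite <- !sqrt_inv, <- sqrt_mult by (apply Rlt_le, Rinv_0_lt_compat; nra).
    f_equal. field. lra. }
  assert (Hsqrt2 : sqrt (2 / PI) = 2 * / sqrt (2 * PI)).
  { replace (2 / PI) with (2 * 2 * / (2 * PI)) by (field; lra).
    rewrite sqrt_mult, sqrt_square, sqrt_inv by (try apply Rlt_le, Rinv_0_lt_compat; nra).
    reflexivity. }
  assert (Hprof : window_profile p 0 / 2 = / sqrt (2 * PI) * exp (t / 4 + - (t / 2))).
  { rewrite window_profile_0, Hsqrt2.
    replace (- / (4 * (p * (1 - p)))) with (t / 4 + - (t / 2)) by (unfold t; field; lra).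
    field. apply Rgt_not_eq, sqrt_lt_R0. lra. }
  replace (- / (2 * (p * (1 - p)))) with (- (t / 2)) by (unfold t; field; lra).
  rewrite Hpeak, Hprof, exp_plus.
  assert (Hsqrt : sqrt t <= exp (t / 4)).
  { apply Rle_trans with (1 + t / 4); [| apply exp_ineq1_le].
    rewrite <- (sqrt_square (1 + t / 4)) by lra. apply sqrt_le_1_alt.
    pose proof (pow2_ge_0 (1 - t / 4)). nra. }
  pose proof (exp_pos (- (t / 2))).
  assert (0 < / sqrt (2 * PI)) by (apply Rinv_0_lt_compat, sqrt_lt_R0; lra).
  rewrite (Rmult_comm (sqrt t)), Rmult_assoc. apply Rmult_le_compat_l; [lra |].
  apply Rmult_le_compat_r; lra.
Qed.

Lemma sum_pow_binom_pmf_upper (d : nat) : (1 <= d)%nat ->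
  exists eps : nat -> R, Un_cv eps 0 /\ exists N, forall n, (N <= n)%nat ->
  sum_f_R0 (fun k => binom_pmf p n k ^ d) n <=
  (binom_peak p + eps n) ^ (d - 1) / sqrt (INR n) ^ (d - 1).
Proof.
  intros Hd. destruct sqrt_binom_pmf_mode_asymptotic as [eps [Heps [N HN]]].
  exists eps. split; [exact Heps |]. exists (Nat.max N 1). intros n Hn.
  destruct d as [| d]; [lia |]. replace (S d - 1)%nat with d by lia.
  eapply Rle_trans; [apply (sum_pow_binom_pmf_le_mode p Hp) |].
  assert (Hsv : 0 < sqrt (INR n)) by (apply sqrt_lt_R0, lt_0_INR; lia).
  set (M := binom_pmf p n (binom_mode p n)) in *.
  replace (M ^ d) with ((sqrt (INR n) * M) ^ d / sqrt (INR n) ^ d)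
    by (rewrite Rpow_mult_distr; field; apply pow_nonzero; lra).
  unfold Rdiv. apply Rmult_le_compat_r; [apply Rlt_le, Rinv_0_lt_compat, pow_lt, Hsv |].
  apply pow_incr. split; [apply Rmult_le_pos; [lra | apply binom_pmf_nonneg, Hp] | apply HN; lia].
Qed.

(* The [sqrt n / 2] terms of the window above the mode are each at least
   [(4/5) window_profile p 0 / sqrt n], and [(8/5)^d >= 2] absorbs the factor [1/2] lost in
   [binom_peak_exp_le_half_window_profile_0]. *)
Lemma sum_pow_binom_pmf_lower (d : nat) : (2 <= d)%nat -> exists N, forall n, (N <= n)%nat ->
  (binom_peak p * exp (- / (2 * (p * (1 - p))))) ^ d / sqrt (INR n) ^ (d - 1) <=
  sum_f_R0 (fun k => binom_pmf p n k ^ d) n.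
Proof.
  intros Hd. destruct sqrt_binom_pmf_window_asymptotic as [N HN].
  exists (Nat.max N 1). intros n Hn. destruct (HN n ltac:(lia)) as [Hkn Hk].
  pose proof window_profile_0_pos as HL0. pose proof binom_peak_exp_le_half_window_profile_0 as HB.
  set (L := window_profile p 0 / 2) in *.
  set (B := binom_peak p * exp (- / (2 * (p * (1 - p))))) in *.
  assert (HB0 : 0 <= B).
  { unfold B, binom_peak. apply Rmult_le_pos; [| apply Rlt_le, exp_pos].
    apply Rlt_le, Rinv_0_lt_compat, sqrt_lt_R0, two_pi_var_pos. }
  destruct (nat_sqrt_half_bounds n) as [_ Hsqrt_w].
  set (sv := sqrt (INR n)) in *. set (w := (Nat.sqrt n / 2)%nat) in *.
  assert (Hsv : 0 < sv) by (apply sqrt_lt_R0, lt_0_INR; lia).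
  assert (Hw : sv / 2 <= INR (S w)) by (rewrite S_INR; lra).
  set (b := binom_pmf p n (binom_mode p n + w)) in *.
  assert (Hb : 8 / 5 * L / sv <= b)
    by (apply (Rmult_le_reg_l sv); [lra |]; unfold L; field_simplify; lra).
  eapply Rle_trans; [| apply (sum_pow_binom_pmf_ge_window p Hp n d w Hkn)]. fold b.
  destruct d as [| d]; [lia |]. replace (S d - 1)%nat with d by lia.
  assert (H85 : 2 <= (8 / 5) ^ S d)
    by (apply Rle_trans with ((8 / 5) ^ 2); [simpl; lra | apply Rle_pow; [lra | lia]]).
  apply Rle_trans with ((8 / 5 * L / sv) ^ S d * (sv / 2)).
  - replace ((8 / 5 * L / sv) ^ S d * (sv / 2)) with ((8 / 5) ^ S d / 2 * (L ^ S d / sv ^ d))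
      by (unfold Rdiv; rewrite !Rpow_mult_distr, !pow_inv; simpl; field;
          repeat split; apply pow_nonzero || idtac; lra).
    assert (0 <= L ^ S d / sv ^ d) by (apply Rdiv_le_0_compat; [apply pow_le | apply pow_lt]; lra).
    apply Rle_trans with (L ^ S d / sv ^ d); [| nra].
    unfold Rdiv. apply Rmult_le_compat_r; [apply Rlt_le, Rinv_0_lt_compat, pow_lt, Hsv |].
    apply pow_incr. lra.
  - apply Rmult_le_compat; [apply pow_le; apply Rdiv_le_0_compat; lra | lra | | exact Hw].
    apply pow_incr. split; [apply Rdiv_le_0_compat; lra | exact Hb].
Qed.

End Asymptotics.

Lemma Pprod_pos (d : nat) (p : nat -> R) : (1 <= d)%nat ->
  (forall j, (j < d)%nat -> 0 < p j < 1) -> 0 < Pprod d p.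
Proof.
  intros Hd Hp. unfold Pprod.
  assert (Hfac : forall j, (j <= Nat.pred d)%nat -> 0 < p j / (1 - p j)).
  { intros j Hj. destruct (Hp j ltac:(lia)). apply Rdiv_lt_0_compat; lra. }
  clear Hp Hd. induction (Nat.pred d) as [| m IH]; simpl.
  - apply Hfac. lia.
  - apply Rmult_lt_0_compat; [apply IH; intros; apply Hfac; lia | apply Hfac; lia].
Qed.

Lemma root_d_pos (d : nat) (P : R) : 0 < root_d d P.
Proof. apply exp_pos. Qed.

Lemma root_d_pow (d : nat) (P : R) : (1 <= d)%nat -> 0 < P -> root_d d P ^ d = P.
Proof.
  intros Hd HP. assert (1 <= INR d) by (apply (le_INR 1); lia).
  unfold root_d. rewrite <- Rpower_pow, Rpower_mult by apply exp_pos.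
  replace (1 / INR d * INR d) with 1 by (field; lra). apply Rpower_1, HP.
Qed.

Lemma Rpower_neg_half_pred (x : R) (d : nat) : 0 < x -> (1 <= d)%nat ->
  Rpower x (- (INR d - 1) / 2) = / sqrt x ^ (d - 1).
Proof.
  intros Hx Hd.
  replace (- (INR d - 1) / 2) with (- (/ 2 * INR (d - 1)))
    by (rewrite minus_INR by lia; simpl; field).
  rewrite Rpower_Ropp, <- Rpower_mult, Rpower_sqrt, Rpower_pow
    by (try apply sqrt_lt_R0; assumption).
  reflexivity.
Qed.

Section OddsParameter.

Variable r : R.
Hypothesis Hr : 0 < r.

Lemma odds_prob_bounds : 0 < r / (1 + r) < 1.
Proof.
  split; [apply Rdiv_lt_0_compat; lra |].
  apply (Rmult_lt_reg_r (1 + r)); [lra |]. unfold Rdiv. rewrite Rmult_assoc, Rinv_l; lra.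
Qed.

Lemma binom_peak_odds : binom_peak (r / (1 + r)) = (r + 1) / sqrt (2 * PI * r).
Proof.
  pose proof PI_RGT_0. unfold binom_peak.
  assert (H2pir : 0 < 2 * PI * r) by (apply Rmult_lt_0_compat; lra).
  replace (2 * PI * (r / (1 + r)) * (1 - r / (1 + r))) with (2 * PI * r * / (r + 1) ^ 2)
    by (field; lra).
  rewrite sqrt_mult, sqrt_inv, sqrt_pow2 by (try apply Rlt_le, Rinv_0_lt_compat, pow_lt; lra).
  field. split; [apply Rgt_not_eq, sqrt_lt_R0, H2pir | lra].
Qed.

Lemma odds_inv_var : / (2 * (r / (1 + r) * (1 - r / (1 + r)))) = (r + 1) ^ 2 / (2 * r).
Proof. field. lra. Qed.

End OddsParameter.

Theorem proposition7 (d : nat) (p : nat -> R)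
  (hd : (3 <= d)%nat)
  (hp : forall j, (j < d)%nat -> 0 < p j < 1) :
  let P := Pprod d p in
  let r := root_d d P in
  exists eps delta : nat -> R,
    Un_cv eps 0 /\ Un_cv delta 0 /\
    exists N : nat, forall n : nat, (N <= n)%nat ->
      binom_pow_sum d n P <=
        ((r + 1) / sqrt (2 * PI * r) + eps n) ^ (d - 1)
        * Rpower (INR n) (- (INR d - 1) / 2) * (1 + r) ^ (d * n)
      /\
      ((r + 1) / sqrt (2 * PI * r) * exp (- ((r + 1) ^ 2 / (2 * r))) + delta n) ^ d
        * Rpower (INR n) (- (INR d - 1) / 2) * (1 + r) ^ (d * n)
        <= binom_pow_sum d n P.
Proof.
  intros P r.
  pose proof (root_d_pos d P) as Hr. fold r in Hr.
  assert (HrP : r ^ d = P) by (apply root_d_pow, Pprod_pos; [lia | lia | exact hp]).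
  set (q := r / (1 + r)). pose proof (odds_prob_bounds r Hr) as Hq. fold q in Hq.
  destruct (sum_pow_binom_pmf_upper q Hq d ltac:(lia)) as [eps [Heps [N1 Hupper]]].
  destruct (sum_pow_binom_pmf_lower q Hq d ltac:(lia)) as [N2 Hlower].
  exists eps, (fun _ => 0).
  split; [exact Heps |]. split; [apply is_lim_seq_Reals, is_lim_seq_const |].
  exists (Nat.max 1 (Nat.max N1 N2)). intros n Hn.
  specialize (Hupper n ltac:(lia)). specialize (Hlower n ltac:(lia)).
  rewrite <- (binom_peak_odds r Hr), <- (odds_inv_var r Hr), Rplus_0_r. fold q.
  rewrite Rpower_neg_half_pred by (try apply lt_0_INR; lia).
  rewrite <- HrP, binom_pow_sum_eq by exact Hr. fold q.
  pose proof (pow_lt (1 + r) (d * n) ltac:(lra)) as Hpow.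
  split; rewrite (Rmult_comm _ ((1 + r) ^ (d * n))); apply Rmult_le_compat_l; lra.
Qed.
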